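(* Let $M$ be a monoid generated by a finite set $A$, and let $H$ be an $\mathcal{H}$-class of $M$. If the $\mathcal{R}$-class $R$ containing $H$ contains only finitely many $\mathcal{H}$-classes, then the Schützenberger group $\mathcal{G}(H)$ of $H$ is finitely generated and (equipped with a word metric with respect to a finite generating set) is quasi-isometric to the Schützenberger graph $\Gamma(R,A)$.
   Context: Green's relations on a monoid $M$: $x\mathcal{R}y$ iff $xM=yM$; $x\mathcal{L}y$ iff $Mx=My$; $\mathcal{H}=\mathcal{R}\cap\mathcal{L}$. For an $\mathcal{H}$-class $H$, let $\mathrm{Stab}(H)=\{s\in M: sH=H\}$ and $\sigma$ the congruence on it given by $x\,\sigma\,y$ iff $xh=yh$ for all $h\in H$; the (left) Schützenberger group is the group $\mathcal{G}(H)=\mathrm{Stab}(H)/\sigma$. It acts on the $\mathcal{R}$-class $R\supseteq H$ by $(s/\sigma)\cdot r=sr$. Semimetric space: a set with $d:X\times X\to\mathbb{R}^{\ge0}\cup\{\infty\}$, $d(x,y)=0$ iff $x=y$, triangle inequality (not necessarily symmetric). For a directed graph $\Gamma$ with vertex set $V$, edge set $E$, source and target maps $\iota,\tau$, define the semimetric space $\Gamma^*$ with point set $V\cup(E\times(0,1))$: for vertices $x,y$, $d(x,y)$ is the least number of edges in a directed path from $x$ to $y$ ($\infty$ if none); $d((e,\mu),y)=(1-\mu)+d(\tau(e),y)$; $d(x,(e,\mu))=d(x,\iota(e))+\mu$; $d((e,\mu),(f,\nu))=\nu-\mu$ if $e=f$ and $\nu\ge\mu$, and $d(\tau(e),\iota(f))+(1-\mu)+\nu$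 otherwise. The Schützenberger graph $\Gamma(R,A)$ is $\Delta^*$ where $\Delta$ is the directed graph with vertex set $R$ and an edge labelled $a$ from $x$ to $y$ whenever $x,y\in R$, $a\in A$, $xa=y$. A map $f:X\to X'$ of semimetric spaces is a quasi-isometry if there are constants $1\le\lambda<\infty$, $0<\epsilon<\infty$, $0\le\mu<\infty$ with $\frac1\lambda d(x,y)-\epsilon\le d'(f(x),f(y))\le\lambda d(x,y)+\epsilon$ for all $x,y$, and for every $x'\in X'$ some $x\in X$ with $\max(d'(x',f(x)),d'(f(x),x'))\le\mu$. A finitely generated group $G$ is regarded as a semimetric space via $d_S(g,h)=\min\{n:h=gs_1\cdots s_n, s_i\in S\}$ for a finite set $S$ generating $G$ as a monoid. *)

From Stdlib Require Import Reals List ClassicalEpsilon.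
From Coquelicot Require Import Coquelicot.
Set Implicit Arguments.
Open Scope R_scope.

Record Monoid := {
  carrier :> Type;
  mul : carrier -> carrier -> carrier;
  one : carrier;
  mulA : forall x y z, mul x (mul y z) = mul (mul x y) z;
  mul1m : forall x, mul one x = x;
  mulm1 : forall x, mul x one = x }.

Section Green.
Variable M : Monoid.
Local Notation "x * y" := (mul M x y).

Definition wprod (w : list M) : M := fold_right (mul M) (one M) w.

Definition generates (A : list M) : Prop :=
  forall m : M, exists w : list M, (forall a, In a w -> In a A) /\ m = wprod w.

Definition Rrel (x y : M) : Prop := (exists u, y = x * u) /\ (exists v, x = y * v).
Definition Lrel (x y : M) : Prop := (exists u, y = u * x) /\ (exists v, x = v * y).
Definition Hrel (x y : M) : Prop := Rrel x y /\ Lrel x y.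

Definition is_Hclass (H : M -> Prop) : Prop :=
  exists h, forall x, H x <-> Hrel x h.

Definition Rclass_of (H : M -> Prop) (x : M) : Prop :=
  exists h, H h /\ Rrel x h.

Definition finitely_many_Hclasses_in_R (H : M -> Prop) : Prop :=
  exists l : list M, forall x, Rclass_of H x -> exists y, In y l /\ Hrel x y.

Definition Stab (H : M -> Prop) (s : M) : Prop :=
  (forall h, H h -> H (s * h)) /\
  (forall h', H h' -> exists h, H h /\ s * h = h').

Definition schutz_sigma (H : M -> Prop) (x y : M) : Prop :=
  forall h, H h -> x * h = y * h.

(* S (a finite list of elements of Stab(H)) is a set of representatives whose
   schutz_sigma-classes generate the Schützenberger group G(H) = Stab(H)/schutz_sigma as a monoid *)
Definition gen_set (H : M -> Prop) (S : list M) : Prop :=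
  (forall s, In s S -> Stab H s) /\
  (forall g, Stab H g ->
     exists w, (forall s, In s w -> In s S) /\ schutz_sigma H g (wprod w)).

(* word (semi)metric d_S on G(H), computed on representatives in Stab(H):
   d_S([g],[h]) = min { n | [h] = [g][s_1]...[s_n], s_i in S } (+oo if none) *)
Definition word_dist (H : M -> Prop) (S : list M) (g h : M) : Rbar :=
  Glb_Rbar (fun r => exists w : list M,
     (forall s, In s w -> In s S) /\ r = INR (length w) /\ schutz_sigma H h (g * wprod w)).

(* Vertices of Δ: elements of R; edges: pairs (x,a) with x ∈ R, a ∈ A, xa ∈ R,
   from ι(x,a) = x to τ(x,a) = xa, labelled a. *)

Inductive reach (Rc : M -> Prop) (A : list M) : nat -> M -> M -> Prop :=
| reach0 : forall x, Rc x -> reach Rc A 0 x x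
| reachS : forall n x a z, Rc x -> In a A -> Rc (x * a) ->
    reach Rc A n (x * a) z -> reach Rc A (S n) x z.

Definition vdist (Rc : M -> Prop) (A : list M) (x y : M) : Rbar :=
  Glb_Rbar (fun r => exists n, r = INR n /\ reach Rc A n x y).

(* points of Δ^*: vertices, and interior points (e, mu) of edges e = (x,a) *)
Inductive gpoint : Type :=
| PV : M -> gpoint
| PE : M -> M -> R -> gpoint.

Definition gvalid (Rc : M -> Prop) (A : list M) (p : gpoint) : Prop :=
  match p with
  | PV x => Rc x
  | PE x a mu => Rc x /\ In a A /\ Rc (x * a) /\ 0 < mu < 1
  end.

Definition gdist (Rc : M -> Prop) (A : list M) (p q : gpoint) : Rbar :=
  match p, q with
  | PV x, PV y => vdist Rc A x y
  | PE x a mu, PV y => Rbar_plus (1 - mu) (vdist Rc A (x * a) y)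
  | PV x, PE y b nu => Rbar_plus (vdist Rc A x y) nu
  | PE x a mu, PE y b nu =>
      if excluded_middle_informative (x = y /\ a = b /\ mu <= nu)
      then Finite (nu - mu)
      else Rbar_plus (Rbar_plus (vdist Rc A (x * a) y) (1 - mu)) nu
  end.

End Green.

Definition is_quasi_isometry {X Y : Type}
  (VX : X -> Prop) (dX : X -> X -> Rbar) (VY : Y -> Prop) (dY : Y -> Y -> Rbar)
  (f : X -> Y) : Prop :=
  (forall x, VX x -> VY (f x)) /\
  exists lam eps mu : R, 1 <= lam /\ 0 < eps /\ 0 <= mu /\
   (forall x y, VX x -> VX y ->
      Rbar_le (Rbar_minus (Rbar_mult (/ lam) (dX x y)) eps) (dY (f x) (f y)) /\
      Rbar_le (dY (f x) (f y)) (Rbar_plus (Rbar_mult lam (dX x y)) eps)) /\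
   (forall y, VY y -> exists x, VX x /\
      Rbar_le (dY y (f x)) mu /\ Rbar_le (dY (f x) y) mu).

Arguments wprod {M} w.
Arguments generates {M} A.
Arguments Rrel {M} x y.
Arguments Lrel {M} x y.
Arguments Hrel {M} x y.
Arguments is_Hclass {M} H.
Arguments Rclass_of {M} H x.
Arguments finitely_many_Hclasses_in_R {M} H.
Arguments Stab {M} H s.
Arguments schutz_sigma {M} H x y.
Arguments gen_set {M} H S.
Arguments word_dist {M} H S g h.
Arguments vdist {M} Rc A x y.
Arguments gvalid {M} Rc A p.
Arguments gdist {M} Rc A p q.

From Pilot Require Import Defs.
From Stdlib Require Import Reals List Lia Lra Classical ClassicalEpsilon Wf_nat.
From Coquelicot Require Import Coquelicot.

(* Fix h0 in H. Left multiplication by Stab(H) maps the R-class R into itself, preserves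
   the edges of the graph Delta and is invertible on R, and the class of g in G(H) is
   determined by g h0; so g |-> g h0 is the natural orbit map. As R has finitely many
   H-classes, R is covered by the Stab(H)-translates of a finite transversal. Lifting a path
   of Delta edge by edge (Schreier's argument) turns it into a word, one letter per edge,
   over the finitely many elements that move the endpoints of edges leaving the transversal
   back onto it: these generate G(H), and d_S(g,k) is at most linear in the distance from
   g h0 to k h0. Conversely each generator moves h0 a bounded distance, and every point of
   Gamma(R,A) is within bounded distance of a translate of a transversal point. *)

Set Implicit Arguments.
Unset Strict Implicit.

Lemma Glb_Rbar_ge_lb (E : R -> Prop) (c : Rbar) :
  (forall r, E r -> Rbar_le c r) -> Rbar_le c (Glb_Rbar E).
Proof. intros Hc. exact (proj2 (Glb_Rbar_correct E) c Hc). Qed.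

Lemma Glb_Rbar_nat_attained (E : R -> Prop) (r0 : R) :
  E r0 -> (forall r, E r -> exists n, r = INR n) ->
  exists n, E (INR n) /\ INR n <= r0 /\ Glb_Rbar E = Finite (INR n).
Proof.
  intros Er0 Hnat. destruct (Hnat r0 Er0) as [n0 ->].
  destruct (@dec_inh_nat_subset_has_unique_least_element (fun n => E (INR n)))
    as [n [[En Hmin] _]].
  - intros n. apply classic.
  - exists n0. exact Er0.
  - exists n. split; [exact En | split; [apply le_INR, Hmin, Er0 |]].
    apply is_glb_Rbar_unique. split.
    + intros r Er. destruct (Hnat r Er) as [k ->]. apply le_INR, Hmin, Er.
    + intros b Hb. exact (Hb _ En).
Qed.

Lemma list_uniform_bound (T : Type) (L : list T) (Q : T -> nat -> Prop) :
  (forall e, In e L -> exists n, Q e n) ->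
  exists N, forall e, In e L -> exists n, (n <= N)%nat /\ Q e n.
Proof.
  induction L as [|a L IH]; intros HQ.
  - exists 0%nat. intros e [].
  - destruct (HQ a (or_introl eq_refl)) as [na Qa].
    destruct IH as [N HN]; [intros e He; apply HQ; right; exact He |].
    exists (Nat.max na N). intros e [<- | He].
    + exists na. split; [lia | exact Qa].
    + destruct (HN e He) as [n [Hn Qn]]. exists n. split; [lia | exact Qn].
Qed.

Section GreenRelations.
Variable M : Monoid.
Local Infix "**" := (mul M) (at level 40, left associativity).
Implicit Types x y z g u v : M.

Lemma Rrel_refl x : Rrel x x.
Proof. split; exists (Defs.one M); now rewrite mulm1. Qed.

Lemma Rrel_sym x y : Rrel x y -> Rrel y x.
Proof. intros [Hxy Hyx]. split; assumption. Qed.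

Lemma Rrel_trans x y z : Rrel x y -> Rrel y z -> Rrel x z.
Proof.
  intros [[u Hu] [v Hv]] [[u' Hu'] [v' Hv']]. split.
  - exists (u ** u'). now rewrite Hu', Hu, mulA.
  - exists (v' ** v). now rewrite mulA, <- Hv'.
Qed.

Lemma Lrel_refl x : Lrel x x.
Proof. split; exists (Defs.one M); now rewrite mul1m. Qed.

Lemma Lrel_trans x y z : Lrel x y -> Lrel y z -> Lrel x z.
Proof.
  intros [[u Hu] [v Hv]] [[u' Hu'] [v' Hv']]. split.
  - exists (u' ** u). now rewrite Hu', Hu, mulA.
  - exists (v ** v'). now rewrite <- mulA, <- Hv'.
Qed.

Lemma Rrel_mull g x y : Rrel x y -> Rrel (g ** x) (g ** y).
Proof.
  intros [[u Hu] [v Hv]]. split.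
  - exists u. now rewrite Hu, mulA.
  - exists v. now rewrite Hv at 1; rewrite mulA.
Qed.

Lemma Lrel_mulr g x y : Lrel x y -> Lrel (x ** g) (y ** g).
Proof.
  intros [[u Hu] [v Hv]]. split.
  - exists u. now rewrite Hu, mulA.
  - exists v. now rewrite Hv at 1; rewrite mulA.
Qed.

Lemma Rrel_prefix x u v : Rrel x (x ** u ** v) -> Rrel x (x ** u).
Proof.
  intros [_ [r Hr]]. split.
  - exists u. reflexivity.
  - exists (v ** r). now rewrite Hr at 1; rewrite <- !mulA.
Qed.

Lemma wprod_app (w1 w2 : list M) : wprod (w1 ++ w2) = wprod w1 ** wprod w2.
Proof.
  induction w1 as [|a w1 IH]; simpl.
  - now rewrite mul1m.
  - now rewrite IH, mulA.
Qed.

End GreenRelations.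

Section Schutzenberger.
Variable M : Monoid.
Variable A : list M.
Variable H : M -> Prop.
Variable h0 : M.
Variable l : list M.
Hypothesis HH : forall x, H x <-> Hrel x h0.
Hypothesis Hl : forall x, Rclass_of H x -> exists y, In y l /\ Hrel x y.
Hypothesis Hgen : generates A.

Local Infix "**" := (mul M) (at level 40, left associativity).
Local Notation Rc := (Rclass_of H).
Local Notation reach := (reach M Rc A).
Implicit Types x y z g k u v : M.

Lemma H_h0 : H h0.
Proof. apply HH. split; [apply Rrel_refl | apply Lrel_refl]. Qed.

Lemma Rc_iff x : Rc x <-> Rrel x h0.
Proof.
  split.
  - intros [h [Hh Hxh]]. exact (Rrel_trans Hxh (proj1 (proj1 (HH h) Hh))).
  - intros Hx. exists h0. split; [exact H_h0 | exact Hx].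
Qed.

Lemma H_Rc x : H x -> Rc x.
Proof. intros Hx. apply Rc_iff, (proj1 (HH x) Hx). Qed.

Lemma green_translation a b u u' : H a -> H b -> b = u ** a -> a = u' ** b ->
  forall x, H x -> H (u ** x) /\ u' ** (u ** x) = x.
Proof.
  intros Ha Hb Hba Hab x Hx.
  destruct (Rrel_trans (proj1 (proj1 (HH a) Ha)) (Rrel_sym (proj1 (proj1 (HH x) Hx))))
    as [[r Hr] [r' Hr']].
  assert (Eux : u ** x = b ** r) by now rewrite Hr, mulA, <- Hba.
  assert (Eback : u' ** (u ** x) = x) by now rewrite Eux, mulA, <- Hab, Hr.
  split; [| exact Eback].
  apply HH. split.
  - apply Rrel_trans with b; [| exact (proj1 (proj1 (HH b) Hb))].
    split; [exists r' | exists r; exact Eux].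
    now rewrite <- mulA, <- Hr'.
  - apply Lrel_trans with x; [| exact (proj2 (proj1 (HH x) Hx))].
    split; [exists u'; now rewrite Eback | exists u; reflexivity].
Qed.

Lemma Stab_of_Lrel_pair a b u u' : H a -> H b -> b = u ** a -> a = u' ** b -> Stab H u.
Proof.
  intros Ha Hb Hba Hab. split.
  - intros x Hx. exact (proj1 (green_translation Ha Hb Hba Hab Hx)).
  - intros x Hx. destruct (green_translation Hb Ha Hab Hba Hx) as [Hux Eback].
    exists (u' ** x). split; assumption.
Qed.

Lemma Stab_onto_H h : H h -> exists g, Stab H g /\ g ** h0 = h.
Proof.
  intros Hh. destruct (proj2 (proj1 (HH h) Hh)) as [[u Hu] [v Hv]].
  exists v. split; [| now symmetry].
  exact (Stab_of_Lrel_pair H_h0 Hh Hv Hu).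
Qed.

Lemma sigma_iff a b : schutz_sigma H a b <-> a ** h0 = b ** h0.
Proof.
  split.
  - intros Hab. exact (Hab h0 H_h0).
  - intros E x Hx. destruct (proj1 (proj1 (HH x) Hx)) as [_ [r ->]].
    now rewrite !mulA, E.
Qed.

Lemma Stab_one : Stab H (Defs.one M).
Proof. split; intros h Hh; [| exists h]; now rewrite mul1m. Qed.

Lemma Stab_mul g k : Stab H g -> Stab H k -> Stab H (g ** k).
Proof.
  intros [Gin Gonto] [Kin Konto]. split.
  - intros h Hh. rewrite <- mulA. exact (Gin _ (Kin _ Hh)).
  - intros h Hh. destruct (Gonto h Hh) as [h1 [Hh1 <-]].
    destruct (Konto h1 Hh1) as [h2 [Hh2 <-]].
    exists h2. split; [exact Hh2 | now rewrite mulA].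
Qed.

Lemma Stab_wprod (w : list M) : (forall s, In s w -> Stab H s) -> Stab H (wprod w).
Proof.
  induction w as [|s w IH]; intros Hw; simpl.
  - exact Stab_one.
  - apply Stab_mul; [apply Hw; left; reflexivity | apply IH; intros t Ht; apply Hw; right; exact Ht].
Qed.

Lemma Stab_Rc g x : Stab H g -> Rc x -> Rc (g ** x).
Proof.
  intros Hg Hx. apply Rc_iff.
  apply Rrel_trans with (g ** h0); [exact (Rrel_mull g (proj1 (Rc_iff x) Hx)) |].
  exact (proj1 (proj1 (HH _) (proj1 Hg h0 H_h0))).
Qed.

Lemma Stab_left_inverse g : Stab H g ->
  exists d, Stab H d /\ forall x, Rc x -> d ** (g ** x) = x.
Proof.
  intros Hg. assert (Hgh : H (g ** h0)) by exact (proj1 Hg h0 H_h0).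
  destruct (proj2 (proj1 (HH _) Hgh)) as [[d Hd] _].
  exists d. split; [exact (Stab_of_Lrel_pair Hgh H_h0 Hd eq_refl) |].
  intros x Hx. destruct (proj1 (Rc_iff x) Hx) as [_ [r ->]].
  now rewrite (mulA _ g), (mulA _ d), <- Hd.
Qed.

Lemma Rc_of_Stab_mul g y a : Stab H g -> Rc y -> Rc (g ** y ** a) -> Rc (y ** a).
Proof.
  intros Hg Hy Hgya. destruct (Stab_left_inverse Hg) as [d [Hd Ed]].
  replace (y ** a) with (d ** (g ** y ** a)); [exact (Stab_Rc Hd Hgya) |].
  now rewrite !mulA, <- (mulA _ d g y), Ed.
Qed.

Lemma reach_trans n m x y z : reach n x y -> reach m y z -> reach (n + m) x z.
Proof.
  intros Hxy. revert m z. induction Hxy as [x Hx | n x a y Hx Ha Hxa _ IH]; intros m z Hyz.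
  - exact Hyz.
  - econstructor; eauto.
Qed.

Lemma reach_Stab g n x z : Stab H g -> reach n x z -> reach n (g ** x) (g ** z).
Proof.
  intros Hg Hxz. induction Hxz as [x Hx | n x a z Hx Ha Hxa _ IH].
  - constructor. exact (Stab_Rc Hg Hx).
  - apply reachS with a; [exact (Stab_Rc Hg Hx) | exact Ha | |];
      rewrite <- mulA; [exact (Stab_Rc Hg Hxa) | exact IH].
Qed.

Lemma reach_wprod x (w : list M) : incl w A -> Rc x -> Rc (x ** wprod w) ->
  reach (length w) x (x ** wprod w).
Proof.
  revert x. induction w as [|a w IH]; intros x Hw Hx Hxw; simpl in *.
  - rewrite mulm1. constructor. exact Hx.
  - assert (Hxa : Rc (x ** a)).
    { apply Rc_iff. apply Rrel_trans with x; [| exact (proj1 (Rc_iff x) Hx)].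
      apply Rrel_sym, Rrel_prefix with (wprod w). rewrite <- mulA.
      exact (Rrel_trans (proj1 (Rc_iff x) Hx) (Rrel_sym (proj1 (Rc_iff _) Hxw))). }
    apply reachS with a; [exact Hx | apply Hw; left; reflexivity | exact Hxa |].
    rewrite mulA. apply IH; [intros b Hb; apply Hw; right; exact Hb | exact Hxa |].
    now rewrite <- mulA.
Qed.

Lemma reach_connected x z : Rc x -> Rc z -> exists n, reach n x z.
Proof.
  intros Hx Hz.
  destruct (Rrel_trans (proj1 (Rc_iff x) Hx) (Rrel_sym (proj1 (Rc_iff z) Hz))) as [[r ->] _].
  destruct (Hgen r) as [w [Hw ->]].
  exists (length w). exact (reach_wprod Hw Hx Hz).
Qed.

Lemma Stab_of_Lrel x y : Rc x -> Rc y -> Lrel x y -> exists g, Stab H g /\ x = g ** y.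
Proof.
  intros Hx Hy Lxy. pose proof Lxy as [_ [m Hm]].
  destruct (proj1 (Rc_iff y) Hy) as [[p Hp] [v Hv]].
  assert (Exp : x ** p ** v = x) by now rewrite Hm, <- (mulA _ m y p), <- Hp, <- mulA, <- Hv.
  assert (Hxp : H (x ** p)).
  { apply HH. split.
    - apply Rrel_trans with x; [split; [exists v; now symmetry | exists p; reflexivity] |].
      exact (proj1 (Rc_iff x) Hx).
    - rewrite Hp. exact (Lrel_mulr p Lxy). }
  destruct (Stab_onto_H Hxp) as [g [Hg Eg]].
  exists g. split; [exact Hg |].
  now rewrite Hv, mulA, Eg.
Qed.

Definition transversal : list M := h0 :: l.

Lemma transversal_decomp x : Rc x ->
  exists g y, Stab H g /\ In y transversal /\ Rc y /\ x = g ** y.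
Proof.
  intros Hx. destruct (Hl Hx) as [y [Hy [Rxy Lxy]]].
  assert (Ry : Rc y) by exact (proj2 (Rc_iff y) (Rrel_trans (Rrel_sym Rxy) (proj1 (Rc_iff x) Hx))).
  destruct (Stab_of_Lrel Hx Ry Lxy) as [g [Hg ->]].
  exists g, y. exact (conj Hg (conj (or_intror Hy) (conj Ry eq_refl))).
Qed.

(* The transversal together with the endpoints [y a] of the edges leaving it: the elements
   of [Stab H] moving these back onto the transversal are Schreier generators. *)
Definition anchors : list M :=
  transversal ++ flat_map (fun y => map (mul M y) A) transversal.

Lemma transversal_anchor y : In y transversal -> In y anchors.
Proof. intros Hy. apply in_or_app. left. exact Hy. Qed.

Lemma step_anchor y a : In y transversal -> In a A -> In (y ** a) anchors.
Proof.
  intros Hy Ha. apply in_or_app. right. apply in_flat_map.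
  exists y. split; [exact Hy | apply in_map, Ha].
Qed.

(* An element of [Stab H] carrying [v] to [u] if there is one, and the identity otherwise. *)
Definition translator u v : M :=
  match excluded_middle_informative (exists g, Stab H g /\ u = g ** v) with
  | left ex => proj1_sig (constructive_indefinite_description _ ex)
  | right _ => Defs.one M
  end.

Lemma translator_Stab u v : Stab H (translator u v).
Proof.
  unfold translator. destruct excluded_middle_informative as [ex | _]; [| exact Stab_one].
  exact (proj1 (proj2_sig (constructive_indefinite_description _ ex))).
Qed.

Lemma translator_spec u v g : Stab H g -> u = g ** v -> u = translator u v ** v.
Proof.
  intros Hg E. unfold translator.
  destruct excluded_middle_informative as [ex | nex]; [| exfalso; apply nex; exists g; now split].
  exact (proj2 (proj2_sig (constructive_indefinite_description _ ex))).
Qed.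

Definition schreier_gens : list M :=
  map (fun p => translator (fst p) (snd p)) (list_prod anchors transversal).

Lemma schreier_gens_Stab s : In s schreier_gens -> Stab H s.
Proof. intros Hs. apply in_map_iff in Hs as [p [<- _]]. apply translator_Stab. Qed.

Lemma translator_in_schreier_gens u v :
  In u anchors -> In v transversal -> In (translator u v) schreier_gens.
Proof.
  intros Hu Hv. apply (in_map (fun p => translator (fst p) (snd p)) _ (u, v)).
  apply in_prod; assumption.
Qed.

Lemma path_lift n x z : reach n x z -> forall g y,
  Stab H g -> In y transversal -> Rc y -> x = g ** y ->
  exists w y', incl w schreier_gens /\ length w = n /\ In y' transversal /\ Rc y' /\
    z = g ** wprod w ** y'.
Proof.
  induction 1 as [x Hx | n x a z Hx Ha Hxa _ IH]; intros g y Hg Hy Ry ->.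
  - exists nil, y. simpl. rewrite mulm1.
    exact (conj (incl_nil_l _) (conj eq_refl (conj Hy (conj Ry eq_refl)))).
  - assert (Rya : Rc (y ** a)) by exact (Rc_of_Stab_mul Hg Ry Hxa).
    destruct (transversal_decomp Rya) as [g' [y' [Hg' [Hy' [Ry' Eya]]]]].
    set (t := translator (y ** a) y').
    assert (Et : y ** a = t ** y') by exact (translator_spec Hg' Eya).
    destruct (IH (g ** t) y' (Stab_mul Hg (translator_Stab _ _)) Hy' Ry')
      as [w [y'' [Hw [Hlen [Hy'' [Ry'' Ez]]]]]].
    { now rewrite <- mulA, Et, mulA. }
    exists (t :: w), y''. split; [| split; [simpl; now f_equal | split; [exact Hy'' | split; [exact Ry'' |]]]].
    + apply incl_cons; [apply translator_in_schreier_gens; [apply step_anchor |] | ]; assumption.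
    + rewrite Ez. simpl. now rewrite (mulA _ g t).
Qed.

Lemma path_to_word n g k : Stab H g -> Stab H k -> reach n (g ** h0) (k ** h0) ->
  exists w, incl w schreier_gens /\ length w = S n /\ k ** h0 = g ** wprod w ** h0.
Proof.
  intros Hg Hk Hn.
  destruct (path_lift Hn Hg (or_introl eq_refl) (H_Rc H_h0) eq_refl)
    as [w [y [Hw [Hlen [Hy [Ry Ekh]]]]]].
  assert (HW : Stab H (g ** wprod w))
    by exact (Stab_mul Hg (Stab_wprod (fun s Hs => schreier_gens_Stab (Hw s Hs)))).
  assert (HyH : H y).
  { destruct (Stab_left_inverse HW) as [d [Hd Ed]].
    rewrite <- (Ed y Ry), <- Ekh. exact (proj1 Hd _ (proj1 Hk h0 H_h0)). }
  destruct (Stab_onto_H HyH) as [g' [Hg' Eg']].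
  set (t := translator y h0).
  assert (Et : y = t ** h0) by exact (translator_spec Hg' (eq_sym Eg')).
  exists (w ++ t :: nil). split; [| split].
  - apply incl_app; [exact Hw |]. apply incl_cons; [| apply incl_nil_l].
    apply translator_in_schreier_gens; [apply transversal_anchor, Hy | left; reflexivity].
  - rewrite length_app. simpl. now rewrite Hlen, Nat.add_comm.
  - rewrite wprod_app, Ekh, Et. simpl. now rewrite mulm1, !mulA.
Qed.

Lemma schreier_gens_generate : gen_set H schreier_gens.
Proof.
  split; [exact schreier_gens_Stab |]. intros g Hg.
  destruct (reach_connected (H_Rc H_h0) (H_Rc (proj1 Hg h0 H_h0))) as [n Hn].
  rewrite <- (mul1m _ h0) in Hn at 1.
  destruct (path_to_word Stab_one Hg Hn) as [w [Hw [_ E]]].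
  exists w. split; [exact Hw |]. apply sigma_iff. now rewrite E, mul1m.
Qed.

Lemma word_to_path (S : list M) C : (forall s, In s S -> Stab H s) ->
  (forall s, In s S -> exists n, (n <= C)%nat /\ reach n h0 (s ** h0)) ->
  forall w, incl w S -> forall c, Stab H c ->
  exists n, (n <= C * length w)%nat /\ reach n (c ** h0) (c ** wprod w ** h0).
Proof.
  intros HS HC w. induction w as [|s w IH]; intros Hw c Hc.
  - exists 0%nat. split; [lia |]. simpl. rewrite mulm1.
    constructor. exact (Stab_Rc Hc (H_Rc H_h0)).
  - assert (Hs : In s S) by (apply Hw; left; reflexivity).
    destruct (HC s Hs) as [ns [Hns Rs]].
    destruct (IH (proj2 (incl_cons_inv Hw)) (c ** s) (Stab_mul Hc (HS s Hs))) as [m [Hm Rm]].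
    exists (ns + m)%nat. split; [simpl; nia |].
    apply reach_trans with (c ** s ** h0).
    + rewrite <- mulA. exact (reach_Stab Hc Rs).
    + simpl. rewrite mulA. exact Rm.
Qed.

Lemma word_convert (S S' : list M) D : (forall s, In s S' -> Stab H s) ->
  (forall t, In t S -> exists w, (length w <= D)%nat /\ incl w S' /\ t ** h0 = wprod w ** h0) ->
  forall w, incl w S ->
  exists w', incl w' S' /\ (length w' <= D * length w)%nat /\ wprod w ** h0 = wprod w' ** h0.
Proof.
  intros HS' HD w. induction w as [|t w IH]; intros Hw.
  - exists nil. simpl. split; [apply incl_nil_l | split; [lia | reflexivity]].
  - destruct (IH (proj2 (incl_cons_inv Hw))) as [w' [Hw' [Hlen' E']]].
    destruct (HD t (Hw t (or_introl eq_refl))) as [wt [Hlent [Hwt Et]]].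
    exists (wt ++ w'). split; [apply incl_app; assumption | split].
    + rewrite length_app. simpl. lia.
    + (* [t] and [wprod wt] agree on all of [H], in particular on [wprod w' ** h0]. *)
      simpl. rewrite <- mulA, E', wprod_app, <- !mulA.
      apply (proj2 (sigma_iff t (wprod wt)) Et).
      exact (proj1 (Stab_wprod (fun s Hs => HS' s (Hw' s Hs))) h0 H_h0).
Qed.

Lemma word_dist_attained (S : list M) g k w : incl w S -> k ** h0 = g ** wprod w ** h0 ->
  exists w0, incl w0 S /\ k ** h0 = g ** wprod w0 ** h0 /\ (length w0 <= length w)%nat /\
    word_dist H S g k = Finite (INR (length w0)).
Proof.
  intros Hw E. unfold word_dist.
  destruct (@Glb_Rbar_nat_attained (fun r => exists w, incl w S /\ r = INR (length w) /\
              schutz_sigma H k (g ** wprod w)) (INR (length w)))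
    as [m [[w0 [Hw0 [Ew0 Hs0]]] [Hle Eglb]]].
  - exists w. split; [exact Hw | split; [reflexivity | apply sigma_iff; exact E]].
  - intros r [w' [_ [-> _]]]. now exists (length w').
  - exists w0. rewrite <- Ew0. split; [exact Hw0 |].
    split; [exact (proj1 (sigma_iff _ _) Hs0) |].
    split; [apply INR_le; rewrite <- Ew0; exact Hle | exact Eglb].
Qed.

Lemma vdist_of_reach n x z : reach n x z ->
  exists m, (m <= n)%nat /\ vdist Rc A x z = Finite (INR m).
Proof.
  intros Hn. unfold vdist.
  destruct (@Glb_Rbar_nat_attained (fun r => exists n, r = INR n /\ reach n x z) (INR n))
    as [m [_ [Hle Eglb]]].
  - now exists n.
  - intros r [k [-> _]]. now exists k.
  - exists m. split; [apply INR_le, Hle | exact Eglb].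
Qed.

Lemma gen_set_word (S : list M) g k : gen_set H S -> Stab H g -> Stab H k ->
  exists w, incl w S /\ k ** h0 = g ** wprod w ** h0.
Proof.
  intros [_ HS] Hg Hk. destruct (Stab_left_inverse Hg) as [d [Hd Ed]].
  destruct (HS (d ** k) (Stab_mul Hd Hk)) as [w [Hw Hdk]].
  destruct (proj2 Hg (k ** h0) (proj1 Hk h0 H_h0)) as [h [Hh Eh]].
  exists w. split; [exact Hw |].
  rewrite <- mulA, <- (proj1 (sigma_iff _ _) Hdk), <- mulA, <- Eh.
  now rewrite Ed by exact (H_Rc Hh).
Qed.

Definition orbit_map g : gpoint M := PV M (g ** h0).

Lemma orbit_map_compat x y : schutz_sigma H x y -> orbit_map x = orbit_map y.
Proof. intros Hxy. unfold orbit_map. f_equal. exact (proj1 (sigma_iff x y) Hxy). Qed.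

Section OrbitMapBounds.
Variables (S : list M) (C D B : nat).
Hypothesis HS : gen_set H S.
Hypothesis HC : forall s, In s S -> exists n, (n <= C)%nat /\ reach n h0 (s ** h0).
Hypothesis HD : forall t, In t schreier_gens ->
  exists w, (length w <= D)%nat /\ incl w S /\ t ** h0 = wprod w ** h0.
Hypothesis HB : forall z, In z anchors -> Rc z ->
  (exists n, (n <= B)%nat /\ reach n h0 z) /\ (exists n, (n <= B)%nat /\ reach n z h0).

Let lam := INR (C + D) + 1.

Lemma orbit_map_distortion x y : Stab H x -> Stab H y ->
  Rbar_le (Rbar_minus (Rbar_mult (/ lam) (word_dist H S x y)) 1)
    (gdist Rc A (orbit_map x) (orbit_map y)) /\
  Rbar_le (gdist Rc A (orbit_map x) (orbit_map y))
    (Rbar_plus (Rbar_mult lam (word_dist H S x y)) 1).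
Proof.
  intros Hx Hy.
  assert (Hlam : INR C + INR D + 1 = lam) by (unfold lam; now rewrite plus_INR).
  destruct (gen_set_word HS Hx Hy) as [w [Hw E]].
  destruct (word_dist_attained Hw E) as [w0 [Hw0 [E0 [_ Edist]]]].
  cbn [gdist orbit_map]. rewrite Edist. split.
  - apply Glb_Rbar_ge_lb. intros r [n [-> Rn]]. simpl.
    destruct (path_to_word Hx Hy Rn) as [w1 [Hw1 [Hlen1 E1]]].
    destruct (word_convert (fun s Hs => proj1 HS s Hs) HD Hw1) as [w2 [Hw2 [Hlen2 E2]]].
    rewrite <- mulA, E2, mulA in E1.
    destruct (word_dist_attained Hw2 E1) as [w3 [_ [_ [Hlen3 Edist3]]]].
    rewrite Edist in Edist3. injection Edist3 as Edist3. apply INR_eq in Edist3.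
    assert (Hm : INR (length w0) <= INR D * (INR n + 1)).
    { rewrite <- S_INR, <- mult_INR. apply le_INR. lia. }
    pose proof (pos_INR C). pose proof (pos_INR D). pose proof (pos_INR n).
    apply Rmult_le_reg_l with lam; [lra |].
    rewrite Rmult_plus_distr_l, <- Rmult_assoc, Rinv_r, Rmult_1_l by lra. nra.
  - destruct (word_to_path (fun s Hs => proj1 HS s Hs) HC Hw0 Hx) as [n [Hn Rn]].
    rewrite <- E0 in Rn. destruct (vdist_of_reach Rn) as [m [Hm ->]]. simpl.
    assert (INR m <= INR C * INR (length w0)) by (rewrite <- mult_INR; apply le_INR; lia).
    pose proof (pos_INR D). pose proof (pos_INR (length w0)). nra.
Qed.

Lemma anchor_near_orbit g z : Stab H g -> In z anchors -> Rc z ->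
  exists n1 n2, (n1 <= B)%nat /\ (n2 <= B)%nat /\
    vdist Rc A (g ** h0) (g ** z) = Finite (INR n1) /\
    vdist Rc A (g ** z) (g ** h0) = Finite (INR n2).
Proof.
  intros Hg Hz Rz. destruct (HB Hz Rz) as [[k1 [Hk1 R1]] [k2 [Hk2 R2]]].
  destruct (vdist_of_reach (reach_Stab Hg R1)) as [n1 [Hn1 E1]].
  destruct (vdist_of_reach (reach_Stab Hg R2)) as [n2 [Hn2 E2]].
  exists n1, n2. repeat split; [lia | lia | exact E1 | exact E2].
Qed.

Lemma orbit_map_coarsely_onto p : gvalid Rc A p -> exists g, Stab H g /\
  Rbar_le (gdist Rc A p (orbit_map g)) (INR B + 1) /\
  Rbar_le (gdist Rc A (orbit_map g) p) (INR B + 1).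
Proof.
  destruct p as [x | x a mu]; cbn [gvalid gdist orbit_map].
  - intros Hx. destruct (transversal_decomp Hx) as [g [y [Hg [Hy [Ry ->]]]]].
    destruct (anchor_near_orbit Hg (transversal_anchor Hy) Ry) as [n1 [n2 [Hn1 [Hn2 [E1 E2]]]]].
    exists g. rewrite E1, E2. simpl.
    apply le_INR in Hn1, Hn2. split; [exact Hg | split; lra].
  - intros [Hx [Ha [Hxa Hmu]]].
    destruct (transversal_decomp Hx) as [g [y [Hg [Hy [Ry ->]]]]].
    assert (Rya : Rc (y ** a)) by exact (Rc_of_Stab_mul Hg Ry Hxa).
    destruct (anchor_near_orbit Hg (transversal_anchor Hy) Ry) as [n1 [_ [Hn1 [_ [E1 _]]]]].
    destruct (anchor_near_orbit Hg (step_anchor Hy Ha) Rya) as [_ [n2 [_ [Hn2 [_ E2]]]]].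
    exists g. rewrite mulA in E2. rewrite E1, E2. simpl.
    apply le_INR in Hn1, Hn2. split; [exact Hg | split; lra].
Qed.

Lemma orbit_map_quasi_isometry_of_bounds :
  is_quasi_isometry (Stab H) (word_dist H S) (gvalid Rc A) (gdist Rc A) orbit_map.
Proof.
  split; [intros x Hx; exact (H_Rc (proj1 Hx h0 H_h0)) |].
  exists lam, 1, (INR B + 1).
  pose proof (pos_INR (C + D)). pose proof (pos_INR B).
  split; [unfold lam; lra | split; [lra | split; [lra | split]]].
  - exact orbit_map_distortion.
  - intros p Hp. destruct (orbit_map_coarsely_onto Hp) as [g [Hg Hle]].
    exists g. split; [exact Hg | exact Hle].
Qed.

End OrbitMapBounds.

Lemma orbit_map_quasi_isometry (S : list M) : gen_set H S ->
  is_quasi_isometry (Stab H) (word_dist H S) (gvalid Rc A) (gdist Rc A) orbit_map.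
Proof.
  intros HS. pose proof (H_Rc H_h0) as R0.
  destruct (@list_uniform_bound _ S (fun s n => reach n h0 (s ** h0))) as [C HC].
  { intros s Hs. exact (reach_connected R0 (H_Rc (proj1 (proj1 HS s Hs) h0 H_h0))). }
  destruct (@list_uniform_bound _ schreier_gens
              (fun t n => exists w, length w = n /\ incl w S /\ t ** h0 = wprod w ** h0))
    as [D HD].
  { intros t Ht. destruct (gen_set_word HS Stab_one (schreier_gens_Stab Ht)) as [w [Hw E]].
    rewrite mul1m in E. now exists (length w), w. }
  destruct (@list_uniform_bound _ anchors (fun z n => Rc z ->
              (exists j, (j <= n)%nat /\ reach j h0 z) /\ (exists j, (j <= n)%nat /\ reach j z h0)))
    as [B HB].
  { intros z _. destruct (classic (Rc z)) as [Rz | nRz]; [| exists 0%nat; tauto].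
    destruct (reach_connected R0 Rz) as [n1 R1]. destruct (reach_connected Rz R0) as [n2 R2].
    exists (Nat.max n1 n2). intros _. split; [exists n1 | exists n2]; split; (lia || assumption). }
  apply (orbit_map_quasi_isometry_of_bounds (C := C) (D := D) (B := B) HS).
  - intros s Hs. destruct (HC s Hs) as [n [Hn Rn]]. now exists n.
  - intros t Ht. destruct (HD t Ht) as [n [Hn [w [<- Hw]]]]. now exists w.
  - intros z Hz Rz. destruct (HB z Hz) as [n [Hn Hnear]].
    destruct (Hnear Rz) as [[k1 [Hk1 R1]] [k2 [Hk2 R2]]].
    split; [exists k1 | exists k2]; split; (lia || assumption).
Qed.

End Schutzenberger.

Theorem theorem5p2 (M : Monoid) (A : list M) (H : M -> Prop) :
  generates A -> is_Hclass H -> finitely_many_Hclasses_in_R H ->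
  (exists S : list M, gen_set H S) /\
  (forall S : list M, gen_set H S ->
     exists f : M -> gpoint M,
       (forall x y, Stab H x -> Stab H y -> schutz_sigma H x y -> f x = f y) /\
       is_quasi_isometry (Stab H) (word_dist H S)
         (gvalid (Rclass_of H) A) (gdist (Rclass_of H) A) f).
Proof.
  intros Hgen [h0 HH] [l Hl]. split.
  - eexists. exact (schreier_gens_generate HH Hl Hgen).
  - intros S HS. exists (orbit_map h0). split.
    + intros x y _ _ Hxy. exact (orbit_map_compat HH Hxy).
    + exact (orbit_map_quasi_isometry HH Hl Hgen HS).
Qed.
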